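(* Let $W(x)=(x^2-1)^2$ and let $u_0\in\mathcal V$ satisfy $(u_0)_i\ne0$ for all $i\in V$. For $\varepsilon>0$, let $u^\varepsilon(t)$ be the solution of $$\dot u_i=-(\Delta u)_i-\frac1\varepsilon d_i^{-r}W'(u_i)\ (t>0),\qquad u(0)=u_0.$$ Then there exists $\varepsilon_0>0$, depending only on the graph, on $r$ and on $u_0$, such that for every $\varepsilon\in(0,\varepsilon_0]$ and every $i\in V$, $\operatorname{sign}(u^\varepsilon_i(t))=\operatorname{sign}((u_0)_i)$ for all $t\ge0$.
   Context: $G=(V,E)$ is a finite undirected weighted graph with vertex set $V=\{1,\dots,n\}$. The weights satisfy $\omega_{ij}=\omega_{ji}\ge0$, with $\omega_{ij}>0$ iff $\{i,j\}\in E$, and $\omega_{ii}=0$. The degrees are $d_i=\sum_j\omega_{ij}>0$. A parameter $r\in[0,1]$ is fixed. $\mathcal V$ is the space of functions $V\to\mathbb R$. The graph Laplacian is $(\Delta u)_i=d_i^{-r}\sum_j\omega_{ij}(u_i-u_j)$. *)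

From Stdlib Require Import Reals Lra.
Open Scope R_scope.

Fixpoint fsum (n : nat) (f : nat -> R) : R :=
  match n with
  | O => 0
  | S k => fsum k f + f k
  end.

Definition deg (n : nat) (w : nat -> nat -> R) (i : nat) : R :=
  fsum n (fun j => w i j).

Definition weighted_graph (n : nat) (w : nat -> nat -> R) : Prop :=
  (forall i j, (i < n)%nat -> (j < n)%nat -> w i j = w j i) /\
  (forall i j, (i < n)%nat -> (j < n)%nat -> 0 <= w i j) /\
  (forall i, (i < n)%nat -> w i i = 0) /\
  (forall i, (i < n)%nat -> 0 < deg n w i).

Definition laplacian (n : nat) (w : nat -> nat -> R) (r : R)
    (u : nat -> R) (i : nat) : R :=
  Rpower (deg n w i) (- r) * fsum n (fun j => w i j * (u i - u j)).

Definition W (x : R) : R := (x ^ 2 - 1) ^ 2.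
Definition W' (x : R) : R := 4 * x * (x ^ 2 - 1).

Lemma W'_is_derivative : forall x, derivable_pt_lim W x (W' x).
Proof.
  intro x. unfold W, W'.
  replace (4 * x * (x ^ 2 - 1)) with
    (INR 2 * (x ^ 2 - 1) ^ (pred 2) * (INR 2 * x ^ (pred 2) + 0)) by (simpl; ring).
  apply (derivable_pt_lim_comp (fun y => y ^ 2 - 1) (fun y => y ^ 2)).
  - replace (INR 2 * x ^ pred 2 + 0) with (INR 2 * x ^ pred 2 - 0) by ring.
    apply (derivable_pt_lim_minus (fun y => y ^ 2) (fun _ => 1)).
    + apply derivable_pt_lim_pow.
    + apply derivable_pt_lim_const.
  - apply derivable_pt_lim_pow.
Qed.

Definition Rsign (x : R) : R :=
  if Rlt_dec 0 x then 1 else if Rlt_dec x 0 then -1 else 0.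

Definition AC_solution (n : nat) (w : nat -> nat -> R) (r eps : R)
    (u0 : nat -> R) (u : R -> nat -> R) : Prop :=
  (forall i, (i < n)%nat -> u 0 i = u0 i) /\
  (forall i, (i < n)%nat -> forall e, 0 < e ->
     exists delta, 0 < delta /\
       forall t, 0 < t < delta -> Rabs (u t i - u0 i) < e) /\
  (forall i, (i < n)%nat -> forall t, 0 < t ->
     derivable_pt_lim (fun s => u s i) t
       (- laplacian n w r (u t) i
        - / eps * Rpower (deg n w i) (- r) * W' (u t i))).

From Stdlib Require Import Reals Lra Lia Psatz Classical.
Open Scope R_scope.

(* Let m = min(1, min_i |u0_i|), dl = m/2 and K = 2 + sum_i |u0_i|.  Each
   initial value u0_i lies in its "well", the interval (dl, K) if u0_i > 0
   and (-K, -dl) if u0_i < 0.  When every u_j stays in [-K, K], the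
   coupling term sum_j w_ij (u_i - u_j) is bounded by d_i (|u_i| + K), while
   the potential term (1/eps) W'(u_i) pushes u_i away from the walls
   +-dl (where |W'| >= 3 dl) and +-K (where W' has the sign of u_i).  So for
   eps <= eps0 := dl / ((1 + sum_i d_i)(dl + K)) the vector field points
   strictly inward on the walls of the product of the wells. *)

Lemma fsum_le (n : nat) (f g : nat -> R) :
  (forall j, (j < n)%nat -> f j <= g j) -> fsum n f <= fsum n g.
Proof.
  induction n as [|n IH]; simpl; intros H; [lra|].
  assert (f n <= g n) by (apply H; lia).
  assert (fsum n f <= fsum n g) by (apply IH; intros; apply H; lia).
  lra.
Qed.

Lemma fsum_mulr (n : nat) (f : nat -> R) (c : R) :
  fsum n (fun j => f j * c) = fsum n f * c.
Proof. induction n as [|n IH]; simpl; [ring|]. rewrite IH. ring. Qed.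

Lemma fsum_nonneg (n : nat) (f : nat -> R) :
  (forall j, (j < n)%nat -> 0 <= f j) -> 0 <= fsum n f.
Proof.
  intros H. replace 0 with (fsum n (fun _ => 0)).
  - apply fsum_le; exact H.
  - induction n as [|n IH]; simpl; [reflexivity|]. rewrite IH by (intros; apply H; lia). ring.
Qed.

Lemma fsum_ge_term (n : nat) (f : nat -> R) (i : nat) :
  (forall j, (j < n)%nat -> 0 <= f j) -> (i < n)%nat -> f i <= fsum n f.
Proof.
  induction n as [|n IH]; intros H Hi; [lia|]. simpl.
  assert (0 <= f n) by (apply H; lia).
  destruct (Nat.eq_dec i n) as [->|Hne].
  - assert (0 <= fsum n f) by (apply fsum_nonneg; intros; apply H; lia). lra.
  - assert (f i <= fsum n f) by (apply IH; [intros; apply H; lia | lia]). lra.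
Qed.

Fixpoint fmin (n : nat) (f : nat -> R) : R :=
  match n with O => 1 | S k => Rmin (fmin k f) (f k) end.

Lemma fmin_le1 (n : nat) (f : nat -> R) : fmin n f <= 1.
Proof.
  induction n as [|n IH]; simpl; [lra|].
  pose proof (Rmin_l (fmin n f) (f n)). lra.
Qed.

Lemma fmin_pos (n : nat) (f : nat -> R) :
  (forall j, (j < n)%nat -> 0 < f j) -> 0 < fmin n f.
Proof.
  induction n as [|n IH]; simpl; intros H; [lra|].
  apply Rmin_glb_lt; [apply IH; intros; apply H; lia | apply H; lia].
Qed.

Lemma fmin_le (n : nat) (f : nat -> R) (i : nat) : (i < n)%nat -> fmin n f <= f i.
Proof.
  induction n as [|n IH]; intros Hi; [lia|]. simpl.
  destruct (Nat.eq_dec i n) as [->|Hne]; [apply Rmin_r|].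
  eapply Rle_trans; [apply Rmin_l | apply IH; lia].
Qed.

Lemma uniform_right_nbhd (n : nat) (P : nat -> R -> Prop) :
  (forall i, (i < n)%nat -> exists d, 0 < d /\ forall h, 0 < h < d -> P i h) ->
  exists d, 0 < d /\ forall i h, (i < n)%nat -> 0 < h < d -> P i h.
Proof.
  induction n as [|n IH]; intros H.
  - exists 1. split; [lra | intros; lia].
  - destruct IH as [d1 [Hd1 H1]]; [intros; apply H; lia|].
    destruct (H n) as [d2 [Hd2 H2]]; [lia|].
    exists (Rmin d1 d2). split; [apply Rmin_glb_lt; assumption|].
    intros i h Hi Hh. pose proof (Rmin_l d1 d2). pose proof (Rmin_r d1 d2).
    destruct (Nat.eq_dec i n) as [->|Hne]; [apply H2; lra | apply H1; [lia | lra]].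
Qed.

Lemma continuous_induction (P : R -> Prop) :
  (forall c, 0 <= c -> (forall s, 0 <= s < c -> P s) ->
     exists eta, 0 < eta /\ forall s, c <= s < c + eta -> P s) ->
  forall t, 0 <= t -> P t.
Proof.
  intros Hstep T HT. apply NNPP. intros HnT.
  set (E := fun t => 0 <= t <= T /\ forall s, 0 <= s <= t -> P s).
  assert (HP0 : P 0).
  { assert (Hvacuous : forall s, 0 <= s < 0 -> P s) by (intros; lra).
    destruct (Hstep 0 (Rle_refl 0) Hvacuous) as [eta [Heta H]].
    apply H; lra. }
  destruct (completeness E) as [c [Hub Hlub]].
  { exists T. intros x [Hx _]. lra. }
  { exists 0. split; [lra|]. intros s Hs. replace s with 0 by lra. exact HP0. }
  assert (Hc0 : 0 <= c).
  { apply Hub. split; [lra|]. intros s Hs. replace s with 0 by lra. exact HP0. }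
  assert (HcT : c <= T) by (apply Hlub; intros x [Hx _]; lra).
  assert (Hbelow : forall s, 0 <= s < c -> P s).
  { intros s Hs. destruct (classic (exists t, E t /\ s < t)) as [[t [[_ Ht] Hst]] | Hno].
    - apply Ht. lra.
    - exfalso. assert (c <= s); [|lra]. apply Hlub. intros x Ex.
      destruct (Rle_lt_dec x s) as [|Hsx]; [assumption|].
      exfalso. apply Hno. exists x. split; assumption. }
  destruct (Hstep c Hc0 Hbelow) as [eta [Heta Hafter]].
  destruct (Rlt_le_dec c T) as [HcltT | HTc].
  - pose proof (Rmin_l (c + eta / 2) T). pose proof (Rmin_r (c + eta / 2) T).
    set (t' := Rmin (c + eta / 2) T) in *.
    assert (Hct' : c < t') by (apply Rmin_glb_lt; lra).
    assert (HE : E t').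
    { unfold E. split; [lra|]. intros s Hs.
      destruct (Rlt_le_dec s c); [apply Hbelow | apply Hafter]; lra. }
    pose proof (Hub t' HE). lra.
  - apply HnT. apply Hafter. lra.
Qed.

Lemma continuity_pt_eps (f : R -> R) (c : R) :
  continuity_pt f c ->
  forall e, 0 < e -> exists d, 0 < d /\ forall x, Rabs (x - c) < d -> Rabs (f x - f c) < e.
Proof.
  intros Hc e He.
  destruct (Hc e He) as [d [Hd H]]. exists d. split; [assumption|]. intros x Hx.
  destruct (Req_dec x c) as [->|Hxc].
  - rewrite Rminus_diag, Rabs_R0. exact He.
  - apply (H x). split; [split; [exact I | auto] | exact Hx].
Qed.

Lemma left_limit_in_interval (f : R -> R) (c a b : R) :
  continuity_pt f c -> 0 < c ->
  (forall s, 0 <= s < c -> a < f s < b) -> a <= f c <= b.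
Proof.
  intros Hcont Hc Hin.
  assert (Hnear : forall e, 0 < e -> exists s, 0 <= s < c /\ Rabs (f s - f c) < e).
  { intros e He. destruct (continuity_pt_eps f c Hcont e He) as [d [Hd H]].
    set (s := c - Rmin d c / 2).
    pose proof (Rmin_l d c). pose proof (Rmin_r d c).
    assert (0 < Rmin d c) by (apply Rmin_glb_lt; lra).
    exists s. split; [unfold s; lra|]. apply H.
    unfold s. rewrite Rabs_left; lra. }
  split; apply Rnot_lt_le; intros Hout.
  - destruct (Hnear (a - f c)) as [s [Hs Hfs]]; [lra|].
    pose proof (Hin s Hs). apply Rabs_def2 in Hfs. lra.
  - destruct (Hnear (f c - b)) as [s [Hs Hfs]]; [lra|].
    pose proof (Hin s Hs). apply Rabs_def2 in Hfs. lra.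
Qed.

Lemma deriv_nonpos_at_left_min (f : R -> R) (c l : R) :
  derivable_pt_lim f c l -> 0 < c ->
  (forall s, 0 <= s < c -> f c < f s) -> l <= 0.
Proof.
  intros Hd Hc Hs. apply Rnot_lt_le. intros Hl.
  destruct (Hd l Hl) as [[del Hdel] Hq]. simpl in Hq.
  pose proof (Rmin_l del c). pose proof (Rmin_r del c).
  assert (0 < Rmin del c) by (apply Rmin_glb_lt; lra).
  set (h := - (Rmin del c / 2)).
  assert (Hh : h <> 0) by (unfold h; lra).
  assert (Hhabs : Rabs h < del) by (unfold h; rewrite Rabs_Ropp, Rabs_pos_eq; lra).
  specialize (Hq h Hh Hhabs).
  assert (Hf : f c < f (c + h)) by (apply Hs; unfold h; lra).
  assert (Hneg : (f (c + h) - f c) / h < 0).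
  { replace ((f (c + h) - f c) / h) with (- ((f (c + h) - f c) / - h)) by (field; exact Hh).
    enough (0 < (f (c + h) - f c) / - h) by lra.
    apply Rdiv_lt_0_compat; unfold h in *; lra. }
  apply Rabs_def2 in Hq. lra.
Qed.

Lemma deriv_nonneg_at_left_max (f : R -> R) (c l : R) :
  derivable_pt_lim f c l -> 0 < c ->
  (forall s, 0 <= s < c -> f s < f c) -> 0 <= l.
Proof.
  intros Hd Hc Hs.
  enough (- l <= 0) by lra.
  apply (deriv_nonpos_at_left_min (opp_fct f) c); [now apply derivable_pt_lim_opp | exact Hc |].
  intros s Hs'. unfold opp_fct. specialize (Hs s Hs'). lra.
Qed.

Lemma stays_inside (f : R -> R) (c a b l : R) :
  derivable_pt_lim f c l -> 0 < c ->
  (forall s, 0 <= s < c -> a < f s < b) ->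
  (f c = a -> 0 < l) -> (f c = b -> l < 0) -> a < f c < b.
Proof.
  intros Hd Hc Hin Ha Hb.
  assert (Hcont : continuity_pt f c) by exact (derivable_continuous_pt f c (exist _ l Hd)).
  destruct (left_limit_in_interval f c a b Hcont Hc Hin) as [[Hlo | Hlo] [Hhi | Hhi]].
  - split; assumption.
  - exfalso. pose proof (Hb Hhi).
    enough (0 <= l) by lra.
    apply (deriv_nonneg_at_left_max f c l Hd Hc). intros s Hs. pose proof (Hin s Hs). lra.
  - exfalso. pose proof (Ha (eq_sym Hlo)).
    enough (l <= 0) by lra.
    apply (deriv_nonpos_at_left_min f c l Hd Hc). intros s Hs. pose proof (Hin s Hs). lra.
  - lra.
Qed.

Definition lower_wall (dl K a : R) : R := if Rlt_dec 0 a then dl else - K.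
Definition upper_wall (dl K a : R) : R := if Rlt_dec 0 a then K else - dl.

Definition in_wells (n : nat) (dl K : R) (u0 x : nat -> R) : Prop :=
  forall i, (i < n)%nat -> lower_wall dl K (u0 i) < x i < upper_wall dl K (u0 i).

Lemma wells_bounded (dl K a x : R) : 0 < dl -> 0 < K ->
  lower_wall dl K a <= x <= upper_wall dl K a -> - K <= x <= K.
Proof. unfold lower_wall, upper_wall. destruct (Rlt_dec 0 a); lra. Qed.

Lemma in_own_well (dl K a : R) : a <> 0 -> 0 < dl -> 2 * dl <= Rabs a -> Rabs a < K ->
  lower_wall dl K a < a < upper_wall dl K a.
Proof.
  intros Ha Hdl Hm HK. unfold lower_wall, upper_wall.
  destruct (Rlt_dec 0 a) as [Hpos | Hnpos].
  - rewrite Rabs_pos_eq in * by lra. lra.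
  - rewrite Rabs_left in * by lra. lra.
Qed.

Lemma Rsign_in_well (dl K a x : R) : a <> 0 -> 0 < dl ->
  lower_wall dl K a < x < upper_wall dl K a -> Rsign x = Rsign a.
Proof.
  intros Ha Hdl. unfold lower_wall, upper_wall, Rsign.
  destruct (Rlt_dec 0 a) as [Hpos | Hnpos]; intros Hx.
  - destruct (Rlt_dec 0 x); [reflexivity | lra].
  - destruct (Rlt_dec a 0); [|lra].
    destruct (Rlt_dec 0 x); [lra|]. destruct (Rlt_dec x 0); [reflexivity | lra].
Qed.

Lemma drift_at_walls (d S A dl K a x : R) :
  0 <= d -> 0 < A -> 0 < dl <= 1/2 -> 1 < K -> d * (dl + K) <= A * dl ->
  d * (x - K) <= S <= d * (x + K) ->
  (x = lower_wall dl K a -> 0 < - S - A * W' x) /\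
  (x = upper_wall dl K a -> - S - A * W' x < 0).
Proof.
  intros Hd HA Hdl HK Hsmall HS.
  unfold lower_wall, upper_wall, W'.
  destruct (Rlt_dec 0 a); split; intros ->.
  - assert (4 * dl * (dl ^ 2 - 1) <= - 3 * dl) by nra. nra.
  - assert (0 < 4 * K * (K ^ 2 - 1)) by nra. nra.
  - assert (4 * - K * ((- K) ^ 2 - 1) < 0) by nra. nra.
  - assert (3 * dl <= 4 * - dl * ((- dl) ^ 2 - 1)) by nra. nra.
Qed.

Lemma coupling_bounds (n : nat) (w : nat -> nat -> R) (x : nat -> R) (i : nat) (K : R) :
  (forall j, (j < n)%nat -> 0 <= w i j) ->
  (forall j, (j < n)%nat -> - K <= x j <= K) ->
  deg n w i * (x i - K) <= fsum n (fun j => w i j * (x i - x j)) <= deg n w i * (x i + K).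
Proof.
  intros Hw Hx. unfold deg. rewrite <- !fsum_mulr.
  split; apply fsum_le; intros j Hj; apply Rmult_le_compat_l;
    [apply Hw; exact Hj | pose proof (Hx j Hj); lra | apply Hw; exact Hj | pose proof (Hx j Hj); lra].
Qed.

Definition ac_field (n : nat) (w : nat -> nat -> R) (r eps : R) (x : nat -> R) (i : nat) : R :=
  - laplacian n w r x i - / eps * Rpower (deg n w i) (- r) * W' (x i).

Lemma field_at_walls (n : nat) (w : nat -> nat -> R) (r eps dl K a : R) (x : nat -> R) (i : nat) :
  (forall j, (j < n)%nat -> 0 <= w i j) ->
  0 < eps -> 0 < dl <= 1/2 -> 1 < K -> deg n w i * (dl + K) <= / eps * dl ->
  (forall j, (j < n)%nat -> - K <= x j <= K) ->
  (x i = lower_wall dl K a -> 0 < ac_field n w r eps x i) /\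
  (x i = upper_wall dl K a -> ac_field n w r eps x i < 0).
Proof.
  intros Hw Heps Hdl HK Hsmall Hx.
  set (p := Rpower (deg n w i) (- r)).
  set (S := fsum n (fun j => w i j * (x i - x j))).
  assert (Hp : 0 < p) by (unfold p, Rpower; apply exp_pos).
  assert (Hfield : ac_field n w r eps x i = p * (- S - / eps * W' (x i)))
    by (unfold ac_field, laplacian; fold p S; ring).
  assert (Hdeg : 0 <= deg n w i) by (apply fsum_nonneg; exact Hw).
  destruct (drift_at_walls (deg n w i) S (/ eps) dl K a (x i) Hdeg
              (Rinv_0_lt_compat eps Heps) Hdl HK Hsmall (coupling_bounds n w x i K Hw Hx))
    as [Hlow Hup].
  rewrite Hfield. split; intros Hwall.
  - apply Rmult_lt_0_compat; [exact Hp | exact (Hlow Hwall)].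
  - pose proof (Hup Hwall). nra.
Qed.

Section Trapping.

Variables (n : nat) (w : nat -> nat -> R) (r eps dl K : R).
Variables (u0 : nat -> R) (u : R -> nat -> R).

Hypothesis w_nonneg : forall i j, (i < n)%nat -> (j < n)%nat -> 0 <= w i j.
Hypothesis eps_pos : 0 < eps.
Hypothesis dl_range : 0 < dl <= 1/2.
Hypothesis K_gt1 : 1 < K.
Hypothesis eps_small : forall i, (i < n)%nat -> deg n w i * (dl + K) <= / eps * dl.
Hypothesis u_solution : AC_solution n w r eps u0 u.
Hypothesis u0_in_wells : in_wells n dl K u0 u0.

Lemma solution_derivative (i : nat) (t : R) : (i < n)%nat -> 0 < t ->
  derivable_pt_lim (fun s => u s i) t (ac_field n w r eps (u t) i).
Proof. intros Hi Ht. destruct u_solution as [_ [_ Hd]]. exact (Hd i Hi t Ht). Qed.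

Lemma solution_right_continuous (c : R) (i : nat) : 0 <= c -> (i < n)%nat ->
  forall e, 0 < e -> exists d, 0 < d /\ forall h, 0 < h < d -> Rabs (u (c + h) i - u c i) < e.
Proof.
  intros Hc Hi e He. destruct u_solution as [Hinit [Hcont0 _]].
  destruct (Rle_lt_or_eq_dec 0 c Hc) as [Hcpos | <-].
  - pose proof (derivable_continuous_pt (fun s => u s i) c
                  (exist _ _ (solution_derivative i c Hi Hcpos))) as Hcont.
    destruct (continuity_pt_eps _ c Hcont e He) as [d [Hd H]].
    exists d. split; [exact Hd|]. intros h Hh. apply H.
    replace (c + h - c) with h by ring. rewrite Rabs_pos_eq; lra.
  - destruct (Hcont0 i Hi e He) as [d [Hd H]].
    exists d. split; [exact Hd|]. intros h Hh.
    rewrite Rplus_0_l, (Hinit i Hi). apply H. exact Hh.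
Qed.

Lemma in_wells_persists (c : R) : 0 <= c -> in_wells n dl K u0 (u c) ->
  exists eta, 0 < eta /\ forall s, c <= s < c + eta -> in_wells n dl K u0 (u s).
Proof.
  intros Hc Hin.
  destruct (uniform_right_nbhd n (fun i h => lower_wall dl K (u0 i) < u (c + h) i
                                             < upper_wall dl K (u0 i))) as [eta [Heta H]].
  { intros i Hi. specialize (Hin i Hi).
    pose proof (Rmin_l (u c i - lower_wall dl K (u0 i)) (upper_wall dl K (u0 i) - u c i)).
    pose proof (Rmin_r (u c i - lower_wall dl K (u0 i)) (upper_wall dl K (u0 i) - u c i)).
    set (gap := Rmin (u c i - lower_wall dl K (u0 i)) (upper_wall dl K (u0 i) - u c i)) in *.
    assert (Hgap : 0 < gap) by (apply Rmin_glb_lt; lra).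
    destruct (solution_right_continuous c i Hc Hi gap Hgap) as [d [Hd Hnear]].
    exists d. split; [exact Hd|]. intros h Hh.
    pose proof (Hnear h Hh) as Hclose. apply Rabs_def2 in Hclose. lra. }
  exists eta. split; [exact Heta|]. intros s Hs i Hi.
  destruct (Rle_lt_or_eq_dec c s (proj1 Hs)) as [Hcs | <-]; [|exact (Hin i Hi)].
  replace s with (c + (s - c)) by ring. apply H; [exact Hi | lra].
Qed.

(* If the solution is in the wells on [0, c), it is still there at time c:
   it lies in the closed wells by continuity, hence in [-K, K], so the
   field points inward at any wall it might have reached. *)
Lemma in_wells_at_limit (c : R) : 0 < c ->
  (forall s, 0 <= s < c -> in_wells n dl K u0 (u s)) -> in_wells n dl K u0 (u c).
Proof.
  intros Hc Hbefore.
  assert (Hclosed : forall j, (j < n)%nat ->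
            lower_wall dl K (u0 j) <= u c j <= upper_wall dl K (u0 j)).
  { intros j Hj. apply (left_limit_in_interval (fun s => u s j)); [| exact Hc |].
    - exact (derivable_continuous_pt _ c (exist _ _ (solution_derivative j c Hj Hc))).
    - intros s Hs. exact (Hbefore s Hs j Hj). }
  assert (Hbounded : forall j, (j < n)%nat -> - K <= u c j <= K)
    by (intros j Hj; apply (wells_bounded dl K (u0 j)); [lra | lra | exact (Hclosed j Hj)]).
  intros i Hi.
  destruct (field_at_walls n w r eps dl K (u0 i) (u c) i (fun j Hj => w_nonneg i j Hi Hj)
              eps_pos dl_range K_gt1 (eps_small i Hi) Hbounded) as [Hlow Hup].
  apply (stays_inside (fun s => u s i) c _ _ _ (solution_derivative i c Hi Hc) Hc);
    [intros s Hs; exact (Hbefore s Hs i Hi) | exact Hlow | exact Hup].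
Qed.

Lemma in_wells_forever (t : R) : 0 <= t -> in_wells n dl K u0 (u t).
Proof.
  apply (continuous_induction (fun t => in_wells n dl K u0 (u t))).
  intros c Hc Hbefore. apply (in_wells_persists c Hc).
  destruct (Rle_lt_or_eq_dec 0 c Hc) as [Hcpos | <-].
  - exact (in_wells_at_limit c Hcpos Hbefore).
  - destruct u_solution as [Hinit _].
    intros i Hi. rewrite (Hinit i Hi). exact (u0_in_wells i Hi).
Qed.

End Trapping.

Lemma initial_in_wells (n : nat) (u0 : nat -> R) :
  (forall i, (i < n)%nat -> u0 i <> 0) ->
  in_wells n (fmin n (fun i => Rabs (u0 i)) / 2) (2 + fsum n (fun i => Rabs (u0 i))) u0 u0.
Proof.
  intros Hu0 i Hi.
  assert (Hm : 0 < fmin n (fun i => Rabs (u0 i)))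
    by (apply fmin_pos; intros j Hj; apply Rabs_pos_lt; exact (Hu0 j Hj)).
  pose proof (fmin_le n (fun i => Rabs (u0 i)) i Hi).
  pose proof (fsum_ge_term n (fun i => Rabs (u0 i)) i (fun j _ => Rabs_pos (u0 j)) Hi).
  apply in_own_well; [exact (Hu0 i Hi) | lra | lra | lra].
Qed.

Lemma eps_threshold (eps dl K D d : R) : 0 < dl -> 0 < K -> 0 <= d <= D ->
  0 < eps <= dl / ((D + 1) * (dl + K)) -> d * (dl + K) <= / eps * dl.
Proof.
  intros Hdl HK Hd [Heps Hle].
  set (X := (D + 1) * (dl + K)) in *.
  assert (HX : 0 < X) by (unfold X; nra).
  assert (HepsX : eps * X <= dl).
  { replace dl with (dl / X * X) by (field; lra).
    apply Rmult_le_compat_r; lra. }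
  assert (Hinv : X <= / eps * dl).
  { replace X with (/ eps * (eps * X)) by (field; lra).
    apply Rmult_le_compat_l; [left; apply Rinv_0_lt_compat |]; lra. }
  assert (d * (dl + K) <= X) by (unfold X; nra).
  lra.
Qed.

Lemma deg_le_total (n : nat) (w : nat -> nat -> R) :
  (forall i j, (i < n)%nat -> (j < n)%nat -> 0 <= w i j) ->
  forall i, (i < n)%nat -> 0 <= deg n w i <= fsum n (fun j => deg n w j).
Proof.
  intros Hw i Hi.
  assert (Hdeg : forall j, (j < n)%nat -> 0 <= deg n w j)
    by (intros j Hj; apply fsum_nonneg; intros k Hk; exact (Hw j k Hj Hk)).
  split; [exact (Hdeg i Hi) | exact (fsum_ge_term n _ i Hdeg Hi)].
Qed.

Theorem mainTheorem17 (n : nat) (w : nat -> nat -> R) (r : R)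
  (u0 : nat -> R) :
  weighted_graph n w ->
  0 <= r <= 1 ->
  (forall i, (i < n)%nat -> u0 i <> 0) ->
  exists eps0, 0 < eps0 /\
    forall eps, 0 < eps <= eps0 ->
    forall u : R -> nat -> R, AC_solution n w r eps u0 u ->
    forall i, (i < n)%nat -> forall t, 0 <= t ->
      Rsign (u t i) = Rsign (u0 i).
Proof.
  intros [_ [Hw _]] _ Hu0.
  set (dl := fmin n (fun i => Rabs (u0 i)) / 2).
  set (K := 2 + fsum n (fun i => Rabs (u0 i))).
  set (D := fsum n (fun i => deg n w i)).
  assert (Hdl : 0 < dl <= 1/2).
  { pose proof (fmin_le1 n (fun i => Rabs (u0 i))).
    pose proof (fmin_pos n (fun i => Rabs (u0 i)) (fun j Hj => Rabs_pos_lt _ (Hu0 j Hj))).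
    unfold dl; lra. }
  assert (HK : 1 < K) by (pose proof (fsum_nonneg n _ (fun j _ => Rabs_pos (u0 j))); unfold K; lra).
  assert (HD : 0 <= D) by (apply fsum_nonneg; intros j Hj; apply (deg_le_total n w Hw j Hj)).
  exists (dl / ((D + 1) * (dl + K))). split.
  { apply Rdiv_lt_0_compat; [| apply Rmult_lt_0_compat]; lra. }
  intros eps Heps u Hsol i Hi t Ht.
  apply (Rsign_in_well dl K); [exact (Hu0 i Hi) | lra |].
  refine (in_wells_forever n w r eps dl K u0 u Hw _ Hdl HK _ Hsol
            (initial_in_wells n u0 Hu0) t Ht i Hi); [lra |].
  intros j Hj. apply (eps_threshold eps dl K D); [lra | lra | exact (deg_le_total n w Hw j Hj) | exact Heps].
Qed.
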